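(* Let $r\ge1$ and let $\gamma_1,\dots,\gamma_{r+1},p_1,\dots,p_{r+1},a_1,\dots,a_{r+1}$ be indeterminates. Let $\mathrm{Wr}$ denote the relations (coefficientwise in $z$) $$\det_{1\le i,j\le r+1}\big[(\gamma_i+\partial_z)^{j-1}(z-p_i)\big]=\det_{1\le i,j\le r+1}\big[z\gamma_i^{j-1}-p_i\gamma_i^{j-1}+(j-1)\gamma_i^{j-2}\big]=c\prod_{i=1}^{r+1}(z-a_i),\qquad c=\prod_{i<j}(\gamma_j-\gamma_i),$$ and set ${\rm Fun}(r{\rm Op}_Z^{\Lambda})=\mathbb{C}(\gamma_i,p_i,a_i)/\mathrm{Wr}$. Let $t=(t_{ij})_{i,j=1}^{r+1}$ be the rational Calogero–Moser Lax matrix $$t_{ii}=p_i-\sum_{j\neq i}\frac{1}{\gamma_i-\gamma_j},\qquad t_{ij}=\frac{1}{\gamma_i-\gamma_j}\cdot\frac{\prod_{k\neq i}(\gamma_i-\gamma_k)}{\prod_{l\neq j}(\gamma_j-\gamma_l)}\ (i\neq j),$$ and define the rCM Hamiltonians by $\det(z-t)=\sum_k H^{rCM}_k(\{\gamma_i\},\{p_i\})z^k$. Then there is an isomorphism of algebras $${\rm Fun}(r{\rm Op}_Z^{\Lambda})\cong\mathbb{C}(\gamma_i,p_i,a_i)\Big/\Big(\text{relations }\det(z-t)=\prod_{i=1}^{r+1}(z-a_i)\text{ coefficientwise in }z\Big).$$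
   Context: ${\rm Fun}(r{\rm Op}_Z^{\Lambda})$ is the algebra of functions on the space of canonical rationally $Z$-twisted Miura $SL(r+1)$-opers on $\mathbb{P}^1$: $Z=\mathrm{diag}(\gamma_1,\dots,\gamma_{r+1})$ is regular semisimple, the oper connection is gauge equivalent to $\partial_z+Z$, the section of the line subbundle has components $s_i(z)=z-p_i$ (degree one, monic), and the only regular singularities are the distinct roots $a_i$ of $\Lambda(z)=\mathcal{D}_{r+1}(z)$, where $\mathcal{D}_{r+1}$ is the twisted Wronskian $\det[(\gamma_i+\partial_z)^{j-1}s_i]$; this gives the relation $\mathrm{Wr}$. *)

(* multinomials (mpoly), fraction fields, real-closed complex,
   and mathcomp-reals' realType (any realType is isomorphic to the reals, so
   complex R is the field of complex numbers). *)
From HB Require Import structures.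
From mathcomp Require Import all_boot all_order all_algebra.
From mathcomp Require Import fraction.
From mathcomp Require Import mpoly.
From mathcomp Require Import complex.
From mathcomp Require Import reals.

Set Implicit Arguments.
Unset Strict Implicit.
Unset Printing Implicit Defensive.

Import Order.TTheory GRing.Theory Num.Theory.
Local Open Scope ring_scope.

Section RCM.
Variables (K : fieldType) (n : nat).

Definition GamField := {fraction {mpoly K[n]}}.

(* The ring K(gamma)[p_1..p_n, a_1..a_n]; variable lshift n i is p_i,
   variable rshift n i is a_i. *)
Definition Alg := {mpoly GamField[n + n]}.

Definition gam (i : 'I_n) : GamField := @FracField.tofrac _ ('X_i : {mpoly K[n]}).
Definition gamA (i : 'I_n) : Alg := (gam i)%:MP.
Definition pA (i : 'I_n) : Alg := 'X_(lshift n i).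
Definition aA (i : 'I_n) : Alg := 'X_(rshift n i).

Definition vdmC : Alg :=
  (\prod_(i < n) \prod_(j < n | (i < j)%N) (gam j - gam i))%:MP.

(* Twisted Wronskian matrix [(gamma_i + d/dz)^(j-1) (z - p_i)] (j 0-indexed). *)
Definition twistOp (g : Alg) (q : {poly Alg}) : {poly Alg} := g *: q + q^`().

Definition wronskMx : 'M[{poly Alg}]_n :=
  \matrix_(i < n, j < n) iter j (twistOp (gamA i)) ('X - (pA i)%:P).

Definition Lambda : {poly Alg} := \prod_(i < n) ('X - (aA i)%:P).

Definition WrPoly : {poly Alg} := \det wronskMx - vdmC%:P * Lambda.

Definition laxMx : 'M[Alg]_n :=
  \matrix_(i < n, j < n)
    if i == j then pA i - (\sum_(k < n | k != i) (gam i - gam k)^-1)%:MP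
    else ((gam i - gam j)^-1 *
          (\prod_(k < n | k != i) (gam i - gam k)) /
          (\prod_(l < n | l != j) (gam j - gam l)))%:MP.

Definition CMPoly : {poly Alg} := char_poly laxMx - Lambda.

End RCM.

Definition in_coef_ideal (A : comRingType) (q : {poly A}) (f : A) : Prop :=
  exists g : 'I_(size q) -> A, f = \sum_(i < size q) g i * q`_i.

(* The twisted Wronskian factors as W = M V with V = [gamma_k^j] the Vandermonde
   matrix and M = diag(z - p_i) + D, where D is the matrix of differentiation at
   the nodes gamma_i in the Lagrange basis: indeed
   (gamma_i + d/dz)^j (z - p_i) = gamma_i^j (z - p_i) + j gamma_i^(j-1), and
   sum_k D_ik gamma_k^j = j gamma_i^(j-1). Off the diagonal, D_ij w_j^2 is
   antisymmetric for w_i = prod_(k <> i) (gamma_i - gamma_k), so conjugation by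
   diag(w_i^2) turns M into (z - t)^T, the diagonal of D supplying the diagonal of
   the Lax matrix. Hence det W = c det(z - t), and c is invertible. *)

From mathcomp Require Import all_boot all_algebra.
From mathcomp Require Import fraction mpoly complex reals.
From mathcomp Require Import ring.

Set Implicit Arguments.
Unset Strict Implicit.
Unset Printing Implicit Defensive.

Import GRing.Theory.
Local Open Scope ring_scope.

Lemma horner_deriv_prod_XsubC (F : fieldType) (I : Type) (s : seq I) (P : pred I)
    (c : I -> F) x :
  (forall l, P l -> x - c l != 0) ->
  (\prod_(l <- s | P l) ('X - (c l)%:P))^`().[x] =
  (\prod_(l <- s | P l) (x - c l)) * \sum_(l <- s | P l) (x - c l)^-1.
Proof.
move=> xc_neq0; elim: s => [|a s IHs]; first by rewrite !big_nil derivC horner0 mulr0.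
rewrite !big_cons; case: ifP => // Pa.
rewrite derivM derivXsubC mul1r hornerD hornerM hornerXsubC IHs horner_prod.
under eq_bigr do rewrite hornerXsubC.
by rewrite mulrDr mulrA; congr (_ + _); rewrite mulrAC mulfV ?mul1r ?xc_neq0.
Qed.

Section LagrangeDifferentiation.
Variables (F : fieldType) (n : nat) (g : 'I_n -> F).
Hypothesis g_inj : injective g.

Lemma subr_nodes_neq0 i k : k != i -> g i - g k != 0.
Proof. by rewrite subr_eq0 eq_sym inj_eq. Qed.

Definition node_weight i := \prod_(k < n | k != i) (g i - g k).

Definition node_numer k : {poly F} := \prod_(l < n | l != k) ('X - (g l)%:P).

Lemma node_weight_neq0 i : node_weight i != 0.
Proof. by apply/prodf_neq0 => k; apply: subr_nodes_neq0. Qed.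

Lemma horner_node_numer k m : (node_numer k).[g m] = (m == k)%:R * node_weight k.
Proof.
rewrite horner_prod; have [->|mk] := eqVneq m k.
  by rewrite mul1r; apply: eq_bigr => l _; rewrite hornerXsubC.
by rewrite mul0r (bigD1 m) //= hornerXsubC subrr mul0r.
Qed.

Lemma size_node_numer k : (size (node_numer k) <= n)%N.
Proof.
rewrite /node_numer -big_filter size_prod_XsubC size_filter -sum1_count sum1dep_card.
by rewrite cardsE cardC1 card_ord ltn_predL (leq_ltn_trans _ (ltn_ord k)).
Qed.

Lemma lagrange_interpolation (f : {poly F}) : (size f <= n)%N ->
  f = \sum_(k < n) (f.[g k] / node_weight k) *: node_numer k.
Proof.
move=> size_f; apply/eqP; rewrite -subr_eq0; apply/eqP.
set d := _ - _; apply: contraTeq isT => d_neq0.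
have roots_d : all (root d) [seq g k | k <- enum 'I_n].
  apply/allP => _ /mapP[m _ ->]; rewrite /root /d hornerD hornerN horner_sum.
  rewrite (bigD1 m) //= big1 => [|k km]; rewrite hornerZ horner_node_numer.
    by rewrite eqxx mul1r mulfVK ?node_weight_neq0 // addr0 subrr.
  by rewrite eq_sym (negbTE km) mul0r mulr0.
have := max_poly_roots d_neq0 roots_d.
rewrite map_inj_uniq ?enum_uniq // size_map size_enum_ord ltnNge.
move=> /(_ isT) /negP[]; apply: leq_trans (size_polyD _ _) _.
rewrite geq_max size_f size_polyN; apply: leq_trans (size_sum _ _ _) _.
apply/bigmax_leqP => k _; exact: leq_trans (size_scale_leq _ _) (size_node_numer k).
Qed.

Definition diff_mx : 'M[F]_n :=
  \matrix_(i, k) ((node_numer k)^`().[g i] / node_weight k).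

Lemma diff_mx_horner (f : {poly F}) i : (size f <= n)%N ->
  \sum_(k < n) diff_mx i k * f.[g k] = f^`().[g i].
Proof.
move=> size_f; rewrite [in RHS](lagrange_interpolation size_f).
rewrite (big_morph _ (@derivD _) (deriv0 _)) horner_sum.
by apply: eq_bigr => k _; rewrite derivZ hornerZ mxE mulrC mulrA mulrAC.
Qed.

Lemma diff_mx_Vandermonde :
  diff_mx *m (Vandermonde n (\row_i g i))^T = \matrix_(i, j) (g i ^+ j.-1 *+ j).
Proof.
apply/matrixP => i j; rewrite !mxE.
have := @diff_mx_horner 'X^j i; rewrite size_polyXn derivXn hornerMn hornerXn.
by move=> <- //; apply: eq_bigr => k _; rewrite !mxE hornerXn.
Qed.

Lemma diff_mxE i k : diff_mx i k =
  if i == k then \sum_(l < n | l != i) (g i - g l)^-1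
  else (g i - g k)^-1 * node_weight i / node_weight k.
Proof.
rewrite mxE; have [<-|ik] := eqVneq i k.
  rewrite horner_deriv_prod_XsubC => [|l]; last exact: subr_nodes_neq0.
  by rewrite -/(node_weight i) mulrC mulKf ?node_weight_neq0.
rewrite /node_numer (bigD1 i) //= derivM derivXsubC mul1r hornerD hornerM.
rewrite hornerXsubC subrr mul0r addr0 horner_prod /node_weight [in RHS](bigD1 k) 1?eq_sym //=.
rewrite mulrA mulVf ?mul1r; last by rewrite subr_nodes_neq0 // eq_sym.
by congr (_ / _); apply: eq_big => [l|l _]; [exact: andbC | exact: hornerXsubC].
Qed.

Lemma diff_mx_skew i j : i != j ->
  diff_mx i j * node_weight j ^+ 2 = - (diff_mx j i * node_weight i ^+ 2).
Proof.
move=> ij; rewrite !diff_mxE (negbTE ij) eq_sym (negbTE ij).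
have gji := subr_nodes_neq0 ij; have gij := subr_nodes_neq0 (contra_neq esym ij).
by field; rewrite gij gji !node_weight_neq0.
Qed.
End LagrangeDifferentiation.

Lemma rmorph_lreg (F : fieldType) (R : pzRingType) (f : {rmorphism F -> R}) x :
  x != 0 -> GRing.lreg (f x).
Proof.
move=> x_neq0; apply: (@GRing.lregMl _ (f x^-1)).
by rewrite -rmorphM mulVf // rmorph1; apply: lreg1.
Qed.

Lemma iter_twist_XsubC (A : comNzRingType) (c p : A) j :
  iter j (fun q : {poly A} => c *: q + q^`()) ('X - p%:P) =
  c ^+ j *: ('X - p%:P) + (c ^+ j.-1 *+ j)%:P.
Proof.
elim: j => [|j IHj]; first by rewrite expr0 scale1r mulr0n addr0.
rewrite iterS IHj derivD derivZ derivXsubC derivC addr0 alg_polyC.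
rewrite scalerDr scalerA -exprS -addrA scale_polyC -polyCD; congr (_ + _%:P).
case: j {IHj} => [|j]; first by rewrite mulr0n mulr0 add0r.
by rewrite mulrnAr -exprS [RHS]mulrSr.
Qed.

Section CalogeroMoser.
Variables (F : fieldType) (A : comNzRingType) (phi : {rmorphism F -> A}).
Variables (n : nat) (g : 'I_n -> F) (p : 'I_n -> A).
Hypothesis g_inj : injective g.

Definition cm_lax : 'M[A]_n := \matrix_(i, j)
  if i == j then p i - phi (diff_mx g i i) else phi (diff_mx g i j).

Definition twisted_wronskian : 'M[{poly A}]_n := \matrix_(i, j)
  iter j (fun q => phi (g i) *: q + q^`()) ('X - (p i)%:P).

Let phiP := polyC \o phi.

Definition wronskian_factor : 'M[{poly A}]_n :=
  diag_mx (\row_i ('X - (p i)%:P)) + map_mx phiP (diff_mx g).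

Lemma twisted_wronskian_factor :
  twisted_wronskian = wronskian_factor *m map_mx phiP (Vandermonde n (\row_i g i))^T.
Proof.
apply/matrixP => i j; rewrite mulmxDl -map_mxM (diff_mx_Vandermonde g_inj) mul_diag_mx !mxE.
by rewrite iter_twist_XsubC /phiP /= mulrC mul_polyC rmorphMn !rmorphXn.
Qed.

Let weight_sq_mx := diag_mx (\row_i phiP (node_weight g i ^+ 2)).

Lemma wronskian_factor_conj :
  weight_sq_mx *m (char_poly_mx cm_lax)^T = wronskian_factor *m weight_sq_mx.
Proof.
rewrite /cm_lax /wronskian_factor; have := diff_mx_skew g_inj.
move: (diff_mx g) => D skewD; apply/matrixP => i j.
rewrite mul_diag_mx mul_mx_diag !mxE /phiP /=.
have [<-|ij] := eqVneq i j; first by rewrite !mulr1n polyCB; ring.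
by rewrite mulr0n sub0r add0r mulrN -!polyCM -polyCN -!rmorphM -rmorphN skewD // mulrC.
Qed.

Lemma det_wronskian_factor : \det wronskian_factor = char_poly cm_lax.
Proof.
have reg_S : GRing.lreg (\det weight_sq_mx).
  rewrite det_diag; under eq_bigr do rewrite mxE; rewrite -rmorph_prod.
  by apply/rmorph_lreg/prodf_neq0 => i _; rewrite expf_neq0 ?node_weight_neq0.
have := congr1 determinant wronskian_factor_conj.
by rewrite !det_mulmx det_tr [RHS]mulrC => /reg_S.
Qed.

Theorem det_twisted_wronskian : \det twisted_wronskian =
  (phi (\prod_(i < n) \prod_(j < n | (i < j)%N) (g j - g i)))%:P * char_poly cm_lax.
Proof.
rewrite twisted_wronskian_factor det_mulmx det_wronskian_factor det_map_mx det_tr.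
rewrite det_Vandermonde mulrC; congr (polyC (phi _) * _).
by apply: eq_bigr => i _; apply: eq_bigr => j _; rewrite !mxE.
Qed.
End CalogeroMoser.

Lemma in_coef_idealZ (A : comUnitRingType) (c : A) (q : {poly A}) f :
  c \is a GRing.unit -> in_coef_ideal (c *: q) f <-> in_coef_ideal q f.
Proof.
move=> c_unit; rewrite /in_coef_ideal lreg_size; last exact: mulrI.
split=> -[h ->]; [exists (fun i => h i * c) | exists (fun i => h i / c)];
  by apply: eq_bigr => i _; rewrite coefZ mulrA ?divrK.
Qed.

Section RationalCalogeroMoser.
Variables (K : fieldType) (n : nat).

Lemma gam_inj : injective (@gam K n).
Proof.
move=> i j /eqP; rewrite /gam tofrac_eq => /eqP /(congr1 (mcoeff U_(i))).
rewrite !mcoeffXU eqxx; case: eqP => // _ /eqP.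
by rewrite mulr1n mulr0n oner_eq0.
Qed.

Lemma wronskMxE : wronskMx K n = twisted_wronskian (@mpolyC _ _) (@gam K n) (@pA K n).
Proof. by apply/matrixP => i j; rewrite !mxE. Qed.

Lemma laxMxE : laxMx K n = cm_lax (@mpolyC _ _) (@gam K n) (@pA K n).
Proof.
apply/matrixP => i j; rewrite [LHS]mxE [RHS]mxE !(diff_mxE gam_inj).
by have [->|] := eqVneq i j; rewrite ?eqxx.
Qed.

Lemma WrPolyE : WrPoly K n = vdmC K n *: CMPoly K n.
Proof.
rewrite /WrPoly /CMPoly wronskMxE (det_twisted_wronskian _ _ gam_inj) -laxMxE.
by rewrite -mul_polyC mulrBr.
Qed.

Lemma vdmC_unit : vdmC K n \is a GRing.unit.
Proof.
rewrite rmorph_unit // unitfE; apply/prodf_neq0 => i _; apply/prodf_neq0 => j ij.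
by rewrite subr_eq0 (inj_eq gam_inj) neq_ltn ij orbT.
Qed.
End RationalCalogeroMoser.

Theorem mainTheorem5 (R : realType) (r : nat) (hr : (1 <= r)%N)
    (f : Alg (R[i])%C r.+1) :
  in_coef_ideal (WrPoly (R[i])%C r.+1) f <-> in_coef_ideal (CMPoly (R[i])%C r.+1) f.
Proof.
by rewrite WrPolyE; apply: in_coef_idealZ (vdmC_unit _ _).
Qed.
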